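(* Let $\lambda,\lambda'\in\mathbb{N}_0^N$ be partitions and $T,T'\in\mathcal{Y}(\tau)$ such that $\lfloor\lambda,T\rfloor$ and $\lfloor\lambda',T'\rfloor$ are column-strict and $\lfloor\lambda,T\rfloor\ne\lfloor\lambda',T'\rfloor$. Let $T_S$, resp. $T'_S$, be the sink tableaux built from $\lfloor\lambda,T\rfloor$, resp. $\lfloor\lambda',T'\rfloor$. Then $\langle J_{\lambda,T_S},J_{\lambda',T'_S}\rangle_{\mathbb{T}}=0$.
   Context: Notation. $\mathcal{S}_N$ acts on $x\in\mathbb{C}^N$ by $(xw)_i=x_{w(i)}$ and on $\alpha\in\mathbb{Z}^N$ by $(w\alpha)_i=\alpha_{w^{-1}(i)}$. $\tau$ is a partition of $N$ other than $(N),(1^N)$; $\mathcal{Y}(\tau)$ is the set of reverse standard Young tableaux (fillings of the Ferrers diagram with $1,\dots,N$ decreasing along rows and columns); $c(i,T)=\mathrm{cm}(i,T)-\mathrm{rw}(i,T)$. $V_\tau$ has basis $\mathcal{Y}(\tau)$ with the irreducible orthogonal (Young) representation $\tau$ and invariant inner product $\langle T,T'\rangle_0=\delta_{T,T'}\prod_{i<j,\ c(i,T)\le c(j,T)-2}(1-(c(i,T)-c(j,T))^{-2})$; $\mathcal{P}_\tau$ = $V_\tau$-valued polynomials with $(wp)(x)=\tau(w)p(xw)$. $\mathcal{D}_ip=\partial_ip+\kappa\sum_{j\ne i}\tau(i,j)\frac{p(x)-p(x(i,j))}{x_i-x_j}$, $\mathcal{U}_ip=\mathcal{D}_i(x_ip)-\kappa\sum_{j<i}\tau(i,j)p(x(i,j))$,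 with $-1/h_\tau<\kappa<1/h_\tau$, $h_\tau=\tau_1+\ell(\tau)-1$. $\langle\cdot,\cdot\rangle_{\mathbb{T}}$ is the unique Hermitian form on $\mathcal{P}_\tau$ with $\langle1\otimes T,1\otimes T'\rangle_{\mathbb{T}}=\langle T,T'\rangle_0$, $\langle wf,wg\rangle_{\mathbb{T}}=\langle f,g\rangle_{\mathbb{T}}$, $\langle x_i\mathcal{D}_if,g\rangle_{\mathbb{T}}=\langle f,x_i\mathcal{D}_ig\rangle_{\mathbb{T}}$, $\langle x_if,x_ig\rangle_{\mathbb{T}}=\langle f,g\rangle_{\mathbb{T}}$. For $\alpha\in\mathbb{N}_0^N$: $\alpha^+$ its nonincreasing rearrangement; $r_\alpha(i)=\#\{j:\alpha_j>\alpha_i\}+\#\{j\le i:\alpha_j=\alpha_i\}$. $\beta\vartriangleleft\alpha$ iff $|\beta|=|\alpha|$ and either $\beta^+\prec\alpha^+$ or ($\beta^+=\alpha^+$ and $\beta\prec\alpha$), where $\beta\prec\alpha$ means $\beta\neq\alpha$ and all partial sums of $\beta$ are $\le$ those of $\alpha$. $\zeta_{\alpha,T}$ is the unique element of $\mathcal{P}_\tau$ of the form $x^\alpha\otimes\tau(r_\alpha^{-1})T+\sum_{\beta\vartriangleleft\alpha}x^\beta\otimes t_{\alpha\beta}$ with $\mathcal{U}_i\zeta_{\alpha,T}=(\alpha_i+1+\kappa c(r_\alpha(i),T))\zeta_{\alpha,T}$. $\lfloor\alpha,T\rfloor$: replace each entry $i$ of $T$ by $\alpha^+_i$; column-strict means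 strictly increasing down columns and weakly increasing along rows. $\mathcal{T}(\alpha,T)=\{(\beta,T'):\lfloor\beta,T'\rfloor=\lfloor\alpha,T\rfloor\}$. With $\mathcal{T}=\lfloor\lambda,T\rfloor$: $T_S(i,j)=\#\{(k,l):\mathcal{T}(k,l)>\mathcal{T}(i,j)\}+\#\{(k,l):\mathcal{T}(k,l)=\mathcal{T}(i,j),\ k>i\text{ or }(k=i,l\ge j)\}$. $\mathcal{E}_{-1}(\alpha,T)=\prod_{i<j,\ \alpha_i<\alpha_j}\bigl(1-\frac{\kappa}{\alpha_j-\alpha_i+\kappa(c(r_\alpha(j),T)-c(r_\alpha(i),T))}\bigr)$, $\mathcal{C}_{-1}(T)=\prod_{i<j,\ c(i,T)\le c(j,T)-2}\bigl(1-\frac{1}{c(i,T)-c(j,T)}\bigr)$. $J_{\lambda,T_S}:=\sum_{(\beta,T')\in\mathcal{T}(\lambda,T_S)}\frac{\mathcal{C}_{-1}(T_S)}{\mathcal{C}_{-1}(T')}\mathcal{E}_{-1}(\beta,T')\zeta_{\beta,T'}$. *)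

From HB Require Import structures.
From mathcomp Require Import all_boot all_order all_algebra all_fingroup.
From mathcomp Require Import mpoly.
From Stdlib Require Import ClassicalEpsilon.

Set Implicit Arguments.
Unset Strict Implicit.
Unset Printing Implicit Defensive.

Import Order.TTheory GRing.Theory Num.Theory.
Local Open Scope ring_scope.

(* Conventions: entries of tableaux and coordinates are 0-based:  *)
(* the paper's entry / index  i  (1..N) is our  i-1  : 'I_N.      *)
(* Cells (row, column) are 0-based as well.                         *)

Definition is_partition_of (N : nat) (t : seq nat) : bool :=
  [&& sorted geq t, all (fun k => 0 < k)%N t & sumn t == N].

Definition admissible_shape (N : nat) (t : seq nat) : bool :=
  [&& is_partition_of N t, t != [:: N] & t != nseq N 1%N].

Definition hook_tau (t : seq nat) : nat := (head 0%N t + size t).-1.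

Definition in_diagram (N : nat) (t : seq nat) (rc : 'I_N * 'I_N) : bool :=
  (rc.1 < size t)%N && (rc.2 < nth 0%N t rc.1)%N.

(* Reverse standard Young tableaux: f k = cell (row, column) of entry k *)

Definition is_rsyt (N : nat) (t : seq nat) (f : {ffun 'I_N -> 'I_N * 'I_N}) : bool :=
  [&& injectiveb f, [forall k, in_diagram t (f k)] &
   [forall a, forall b,
     ((((f a).1 == (f b).1) && ((f a).2 < (f b).2)%N) ==> (b < a)%N) &&
     ((((f a).2 == (f b).2) && ((f a).1 < (f b).1)%N) ==> (b < a)%N)]].

Definition RSYT (N : nat) (t : seq nat) := {f : {ffun 'I_N -> 'I_N * 'I_N} | is_rsyt t f}.

Section Tableaux.
Variables (N : nat) (t : seq nat).

Definition rw (T : RSYT N t) (k : 'I_N) : nat := (val T k).1.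
Definition cm (T : RSYT N t) (k : 'I_N) : nat := (val T k).2.
Definition content (T : RSYT N t) (k : 'I_N) : int := (cm T k)%:Z - (rw T k)%:Z.

Variable C : numClosedFieldType.

Definition ip0 (T T' : RSYT N t) : C :=
  if T == T' then
    \prod_(i : 'I_N) \prod_(j : 'I_N | (i < j)%N && (content T i <= content T j - 2)%R)
      (1 - ((content T i - content T j)%:~R : C) ^- 2)
  else 0.

Definition swapped (T T' : RSYT N t) (i i' : 'I_N) : bool :=
  val T == [ffun k => val T' (tperm i i' k)].

(* Coefficient of T in tau(s_i) T', where s_i = (i, i') with i' = i+1:
   Young's (seminormal) representation.  With b = 1/(c(i,T')-c(i+1,T')):
   same row: T'; same column: -T'; rw(i,T') < rw(i+1,T'): T'^(i) + b T';
   otherwise (1 - b^2) T'^(i) + b T'. *)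
Definition young_gen (i i' : 'I_N) (T T' : RSYT N t) : C :=
  if rw T' i == rw T' i' then (T == T')%:R
  else if cm T' i == cm T' i' then - (T == T')%:R
  else
    let b := ((content T' i - content T' i')%:~R : C)^-1 in
    if T == T' then b
    else if swapped T T' i i' then
      (if (rw T' i < rw T' i')%N then 1 else 1 - b ^+ 2)
    else 0.

(* matrices on V_tau indexed by Y(tau): A T T' = coefficient of T in A T' *)
Definition matmul (A B : RSYT N t -> RSYT N t -> C) : RSYT N t -> RSYT N t -> C :=
  fun T T'' => \sum_(T' : RSYT N t) A T T' * B T' T''.

(* rho is the representation tau of S_N (a homomorphism; note that the
   mathcomp product (s * u) is "first s, then u", i.e. u o s) with the
   above values on the adjacent transpositions. *)
Definition is_young_rep (rho : 'S_N -> RSYT N t -> RSYT N t -> C) : Prop :=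
  (forall s u : 'S_N, rho (s * u)%g = matmul (rho u) (rho s)) /\
  (forall i i' : 'I_N, val i' = (val i).+1 -> rho (tperm i i') = young_gen i i').

End Tableaux.

Notation VP C N t := {ffun RSYT N t -> {mpoly C[N]}}.

Section Operators.
Variables (C : numClosedFieldType) (N : nat) (t : seq nat).
Variable rho : 'S_N -> RSYT N t -> RSYT N t -> C.
Variable kappa : C.

Definition psub (w : 'S_N) (q : {mpoly C[N]}) : {mpoly C[N]} :=
  q \mPo [tuple 'X_(w k) | k < N].

Definition mapply (A : RSYT N t -> RSYT N t -> C) (p : VP C N t) : VP C N t :=
  [ffun T => \sum_(T' : RSYT N t) A T T' *: p T'].

Definition act (w : 'S_N) (p : VP C N t) : VP C N t :=
  mapply (rho w) [ffun T => psub w (p T)].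

Definition divdiff (i j : 'I_N) (q : {mpoly C[N]}) : {mpoly C[N]} :=
  epsilon (inhabits 0) (fun r => ('X_i - 'X_j) * r = q - psub (tperm i j) q).

Definition xmul (i : 'I_N) (p : VP C N t) : VP C N t := [ffun T => 'X_i * p T].

Definition dunkl (i : 'I_N) (p : VP C N t) : VP C N t :=
  [ffun T => mderiv i (p T)] +
  kappa *: \sum_(j : 'I_N | j != i)
             mapply (rho (tperm i j)) [ffun T => divdiff i j (p T)].

Definition Uop (i : 'I_N) (p : VP C N t) : VP C N t :=
  dunkl i (xmul i p) -
  kappa *: \sum_(j : 'I_N | (j < i)%N)
             mapply (rho (tperm i j)) [ffun T => psub (tperm i j) (p T)].

Definition mono (m : 'X_{1..N}) (v : RSYT N t -> C) : VP C N t :=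
  [ffun T => v T *: 'X_[m]].

Definition basisv (T : RSYT N t) : RSYT N t -> C := fun T' => (T' == T)%:R.

Definition is_torus_form (H : VP C N t -> VP C N t -> C) : Prop :=
  (forall a f g h, H (a *: f + g) h = a * H f h + H g h) /\
  (forall f g, H g f = Num.conj (H f g)) /\
  (forall T T', H (mono 0%MM (basisv T)) (mono 0%MM (basisv T')) = ip0 C T T') /\
  (forall w f g, H (act w f) (act w g) = H f g) /\
  (forall i f g, H (xmul i (dunkl i f)) g = H f (xmul i (dunkl i g))) /\
  (forall i f g, H (xmul i f) (xmul i g) = H f g).

End Operators.

Section Rank.
Variables (N : nat) (a : 'X_{1..N}).

Definition rank_nat (i : 'I_N) : nat :=
  (#|[pred j : 'I_N | (a i < a j)%N]| +
   #|[pred j : 'I_N | (j < i)%N && (a j == a i)]|)%N.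

Let above (i : 'I_N) := [pred j : 'I_N | (a i < a j)%N || ((j < i)%N && (a j == a i))].

Lemma rank_natE i : rank_nat i = #|above i|.
Proof.
rewrite /rank_nat.
have -> : #|above i| = #|[predU [pred j : 'I_N | (a i < a j)%N] &
                               [pred j : 'I_N | (j < i)%N && (a j == a i)]]|.
  by apply: eq_card => j.
rewrite -cardUI.
have -> : #|[predI [pred j : 'I_N | (a i < a j)%N] &
                   [pred j : 'I_N | (j < i)%N && (a j == a i)]]| = 0%N.
  apply: eq_card0 => j; rewrite !inE; apply/negP => /andP [lt /andP [_ /eqP e]].
  by move: lt; rewrite e ltnn.
by rewrite addn0.
Qed.

Lemma above_irr i : i \notin above i.
Proof. by rewrite inE ltnn eqxx andbT ltnn. Qed.

Lemma rank_lt i : (rank_nat i < N)%N.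
Proof.
rewrite rank_natE -[X in (_ < X)%N]card_ord.
apply: proper_card; apply/properP; split.
  by apply/subsetP.
by exists i => //; apply: above_irr.
Qed.

Definition rank_ord (i : 'I_N) : 'I_N := Ordinal (rank_lt i).

Lemma above_trans i j : j \in above i -> {subset above j <= above i}.
Proof.
rewrite !inE => hj k; rewrite !inE.
case/orP: hj => [hij | /andP [hji /eqP eji]].
  case/orP => [hjk | /andP [_ /eqP ekj]].
    by rewrite (ltn_trans hij hjk).
  by rewrite ekj hij.
case/orP => [hjk | /andP [hkj /eqP ekj]].
  by rewrite -eji hjk.
by rewrite (ltn_trans hkj hji) ekj eji eqxx orbT.
Qed.

Lemma above_total i j : i != j -> (j \in above i) || (i \in above j).
Proof.
move=> nij; rewrite !inE.
case: (ltngtP (a i) (a j)) => [h|h|e] //=; rewrite ?orbT //.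
by case: (ltngtP i j) => // /val_inj eij; rewrite eij eqxx in nij.
Qed.

Lemma rank_inj : injective rank_ord.
Proof.
move=> i j /(congr1 val) /=; rewrite !rank_natE => e.
apply/eqP; apply: contraT => nij.
suff: (#|above i| < #|above j|)%N || (#|above j| < #|above i|)%N.
  by rewrite e ltnn.
case/orP: (above_total nij) => h.
- apply/orP; right; apply: proper_card; apply/properP; split.
    by apply/subsetP; apply: above_trans.
  by exists j => //; apply: above_irr.
- apply/orP; left; apply: proper_card; apply/properP; split.
    by apply/subsetP; apply: above_trans.
  by exists i => //; apply: above_irr.
Qed.

Definition rperm : 'S_N := perm rank_inj.

Lemma rpermE i : val (rperm i) = rank_nat i.
Proof. by rewrite permE. Qed.

End Rank.

Section Orders.
Variable N : nat.

Definition mplus (a : 'X_{1..N}) : 'X_{1..N} :=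
  [multinom nth 0%N (sort geq (a : seq nat)) i | i < N].

Definition is_partition_mnm (a : 'X_{1..N}) : Prop :=
  forall i j : 'I_N, (i <= j)%N -> (a j <= a i)%N.

Definition psums_le (b a : 'X_{1..N}) : bool :=
  [forall k : 'I_N.+1,
     (\sum_(i < N | (i < k)%N) b i <= \sum_(i < N | (i < k)%N) a i)%N].

Definition dom_lt (b a : 'X_{1..N}) : bool := (b != a) && psums_le b a.

Definition tri_lt (b a : 'X_{1..N}) : bool :=
  (mdeg b == mdeg a) &&
  (dom_lt (mplus b) (mplus a) || ((mplus b == mplus a) && dom_lt b a)).

End Orders.

Section Fillings.
Variables (N : nat) (t : seq nat).

(* |_alpha,T_| : the entry k of T (at cell T k) is replaced by alpha^+_k;
   cells outside the diagram get 0 *)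
Definition filling (a : 'X_{1..N}) (T : RSYT N t) : {ffun 'I_N * 'I_N -> nat} :=
  [ffun rc => if [pick k | val T k == rc] is Some k then mplus a k else 0%N].

Definition column_strict (F : {ffun 'I_N * 'I_N -> nat}) : bool :=
  [forall rc, forall rc',
     (in_diagram t rc && in_diagram t rc') ==>
     ((((rc'.1 == rc.1.+1 :> nat) && (rc'.2 == rc.2)) ==> (F rc < F rc')%N) &&
      (((rc'.1 == rc.1) && (rc'.2 == rc.2.+1 :> nat)) ==> (F rc <= F rc')%N))].

Definition is_sink (lam : 'X_{1..N}) (T TS : RSYT N t) : Prop :=
  let F := filling lam T in
  forall k : 'I_N,
    let ij := val TS k in
    k.+1 =
      (#|[pred kl : 'I_N * 'I_N | in_diagram t kl && (F ij < F kl)%N]| +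
       #|[pred kl : 'I_N * 'I_N | [&& in_diagram t kl, F kl == F ij &
            ((ij.1 < kl.1)%N || ((kl.1 == ij.1) && (ij.2 <= kl.2)%N))]]|)%N.

End Fillings.

Section Jack.
Variables (C : numClosedFieldType) (N : nat) (t : seq nat).
Variable rho : 'S_N -> RSYT N t -> RSYT N t -> C.
Variable kappa : C.

Definition is_nsJack (zeta : 'X_{1..N} -> RSYT N t -> VP C N t) : Prop :=
  forall (a : 'X_{1..N}) (T : RSYT N t),
    [/\ (forall T'', (zeta a T T'')@_a = rho ((rperm a)^-1)%g T'' T),
        (forall T'' (b : 'X_{1..N}), (zeta a T T'')@_b != 0 -> b != a -> tri_lt b a) &
        (forall i : 'I_N,
           Uop rho kappa i (zeta a T) =
           ((a i)%:R + 1 + kappa * (content T (rperm a i))%:~R) *: zeta a T)].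

Definition Em1 (a : 'X_{1..N}) (T : RSYT N t) : C :=
  \prod_(i : 'I_N) \prod_(j : 'I_N | (i < j)%N && (a i < a j)%N)
    (1 - kappa / ((a j)%:R - (a i)%:R +
        kappa * (content T (rperm a j) - content T (rperm a i))%:~R)).

Definition Cm1 (T : RSYT N t) : C :=
  \prod_(i : 'I_N) \prod_(j : 'I_N | (i < j)%N && (content T i <= content T j - 2)%R)
    (1 - ((content T i - content T j)%:~R : C)^-1).

Definition mnm_of (d : nat) (b : {ffun 'I_N -> 'I_d}) : 'X_{1..N} :=
  [multinom val (b i) | i < N].

(* J_{lam,TS} = sum over (beta,T') with |_beta,T'_| = |_lam,TS_|.
   Such beta are rearrangements of lam^+, so their entries are <= |lam|;
   they are enumerated injectively by functions 'I_N -> 'I_(|lam|+1). *)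
Definition Jpoly (zeta : 'X_{1..N} -> RSYT N t -> VP C N t)
    (lam : 'X_{1..N}) (TS : RSYT N t) : VP C N t :=
  \sum_(b : {ffun 'I_N -> 'I_(mdeg lam).+1})
   \sum_(T' : RSYT N t | filling (mnm_of b) T' == filling lam TS)
     (Cm1 TS / Cm1 T' * Em1 (mnm_of b) T') *: zeta (mnm_of b) T'.

End Jack.

(* The operators U_i are self-adjoint for the form: x_i D_i by hypothesis, and the transpositions
   because the form is S_N-invariant; kappa is real.  Each zeta_{a,T} is a joint eigenvector with the
   real spectral vector a_i + 1 + kappa c(r_a(i), T), so it suffices that distinct pairs (a, T) have
   distinct spectral vectors.  Since |kappa| < 1/h_tau and contents differ by less than h_tau, equal
   spectral vectors force a = a' (an integer of modulus < 1 vanishes), and then, for kappa <> 0,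
   equal contents, which determine a reverse standard tableau.  For kappa = 0, zeta_{a,T} is the
   monomial x^a (x) tau(r_a^-1) T and the form reduces to <T, T'>_0.  Finally every pair in the
   expansion of J_{lam,T_S} has filling |_lam,T_S_| = |_lam,T_|, so no pair occurs in both sums. *)

From Pilot Require Import Defs.
From HB Require Import structures.
From mathcomp Require Import all_boot all_order all_algebra all_fingroup.
From mathcomp Require Import mpoly.
From Stdlib Require Import ClassicalEpsilon.
From mathcomp Require Import ring zify.
Import Order.TTheory GRing.Theory Num.Theory.
Set Implicit Arguments.
Unset Strict Implicit.
Unset Printing Implicit Defensive.
Local Open Scope ring_scope.

Section HermitianForm.
Variables (C : numClosedFieldType) (V : lmodType C) (form : V -> V -> C).
Hypothesis formDZl : forall a f g h, form (a *: f + g) h = a * form f h + form g h.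
Hypothesis form_conj : forall f g, form g f = Num.conj (form f g).

Lemma formDl f g h : form (f + g) h = form f h + form g h.
Proof. by have := formDZl 1 f g h; rewrite scale1r mul1r. Qed.

Lemma formZl a f h : form (a *: f) h = a * form f h.
Proof.
have form0l : form 0 h = 0.
  by apply: (addrI (form 0 h)); rewrite -formDl !addr0.
by rewrite -[a *: f]addr0 formDZl form0l addr0.
Qed.

Lemma formNl f h : form (- f) h = - form f h.
Proof. by rewrite -scaleN1r formZl mulN1r. Qed.

Lemma form_suml (I : Type) (r : seq I) (P : pred I) (F : I -> V) h :
  form (\sum_(i <- r | P i) F i) h = \sum_(i <- r | P i) form (F i) h.
Proof.
elim/big_rec2: _ => [|i x y _ <-]; last exact: formDl.
by rewrite -(scale0r 0) formZl mul0r.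
Qed.

Lemma formDr f g h : form h (f + g) = form h f + form h g.
Proof. by rewrite !(form_conj _ h) formDl rmorphD. Qed.

Lemma formZr a f h : form h (a *: f) = Num.conj a * form h f.
Proof. by rewrite !(form_conj _ h) formZl rmorphM. Qed.

Lemma formNr f h : form h (- f) = - form h f.
Proof. by rewrite -scaleN1r formZr rmorphN1 mulN1r. Qed.

Lemma form_sumr (I : Type) (r : seq I) (P : pred I) (F : I -> V) h :
  form h (\sum_(i <- r | P i) F i) = \sum_(i <- r | P i) form h (F i).
Proof.
by rewrite form_conj form_suml rmorph_sum; apply: eq_bigr => i _; rewrite [RHS]form_conj.
Qed.

Lemma eigenvectors_orthogonal (A : V -> V) f g (mu nu : C) :
  (forall f g, form (A f) g = form f (A g)) -> nu \is Num.real ->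
  A f = mu *: f -> A g = nu *: g -> mu != nu -> form f g = 0.
Proof.
move=> A_adj nu_real Af Ag mu_neq_nu.
have : mu * form f g = nu * form f g.
  by rewrite -formZl -Af A_adj Ag formZr conj_Creal.
by move/eqP; rewrite -subr_eq0 -mulrBl mulf_eq0 subr_eq0 (negbTE mu_neq_nu) => /eqP.
Qed.

End HermitianForm.

Section PermutationAction.
Variables (C : numClosedFieldType) (N : nat) (t : seq nat).
Variable rho : 'S_N -> RSYT N t -> RSYT N t -> C.

Lemma psubE (w : 'S_N) (q : {mpoly C[N]}) : psub w q = msym w q.
Proof.
rewrite /psub -[RHS]comp_mpoly_id msym_mPo; congr comp_mpoly.
by apply: eq_from_tnth => i; rewrite !tnth_map !tnth_ord_tuple.
Qed.

Lemma psubX (w : 'S_N) (k : 'I_N) : psub w ('X_k : {mpoly C[N]}) = 'X_(w k).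
Proof. by rewrite /psub comp_mpolyXU -tnth_nth tnth_map tnth_ord_tuple. Qed.

Lemma mapplyE A (p : VP C N t) T : mapply A p T = \sum_T' A T T' *: p T'.
Proof. by rewrite ffunE. Qed.

Lemma actE w (p : VP C N t) T : Defs.act rho w p T = \sum_T' rho w T T' *: msym w (p T').
Proof. by rewrite mapplyE; apply: eq_bigr => T' _; rewrite ffunE psubE. Qed.

Hypothesis rho_mul : forall s u : 'S_N, rho (s * u)%g = matmul (rho u) (rho s).

Lemma act_mul u s (p : VP C N t) :
  Defs.act rho u (Defs.act rho s p) = Defs.act rho (s * u)%g p.
Proof.
apply/ffunP => T; rewrite !actE rho_mul /matmul.
under eq_bigr do rewrite actE (raddf_sum (msym _)) scaler_sumr.
under [RHS]eq_bigr do rewrite msymMm scaler_suml.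
rewrite exchange_big /=; apply: eq_bigr => T2 _; apply: eq_bigr => T1 _.
by rewrite msymZ scalerA.
Qed.

Variables (kappa : C) (H : VP C N t -> VP C N t -> C).
Hypothesis hH : is_torus_form rho kappa H.

Lemma act_involution_adjoint s f g : (s * s = 1)%g ->
  H (Defs.act rho s f) g = H f (Defs.act rho s g).
Proof.
move=> ss; have [_ [_ [_ [H_inv _]]]] := hH.
by rewrite -(H_inv 1%g) -[in RHS](H_inv s) act_mul mulg1 -ss -act_mul.
Qed.

End PermutationAction.

Section DividedDifference.
Variables (C : numClosedFieldType) (N : nat) (i j : 'I_N).
Implicit Type q : {mpoly C[N]}.

Lemma subX_neq0 : i != j -> ('X_i - 'X_j : {mpoly C[N]}) != 0.
Proof.
move=> nij; apply/eqP => /(congr1 (mcoeff U_(i))).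
rewrite mcoeffB !mcoeffXU eqxx eq_sym (negbTE nij) mcoeff0 subr0 => /eqP.
by rewrite oner_eq0.
Qed.

Definition divisible_antisym q := exists r, ('X_i - 'X_j) * r = q - msym (tperm i j) q.

Lemma divisible_antisymP q : divisible_antisym q.
Proof.
have divD q1 q2 : divisible_antisym q1 -> divisible_antisym q2 -> divisible_antisym (q1 + q2).
  move=> [r1 e1] [r2 e2]; exists (r1 + r2).
  by rewrite mulrDr e1 e2 msymD opprD addrACA.
have divZ c q1 : divisible_antisym q1 -> divisible_antisym (c *: q1).
  by move=> [r e]; exists (c *: r); rewrite -scalerAr e msymZ scalerBr.
have divM q1 q2 : divisible_antisym q1 -> divisible_antisym q2 -> divisible_antisym (q1 * q2).
  (* twisted Leibniz rule: q1 q2 - s(q1 q2) = (q1 - s q1) q2 + s(q1) (q2 - s q2) *)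
  move=> [r1 e1] [r2 e2]; exists (r1 * q2 + msym (tperm i j) q1 * r2).
  rewrite mulrDr mulrA e1 mulrCA e2 msymM; ring.
have div1 : divisible_antisym 1 by exists 0; rewrite msym1 mulr0 subrr.
have divX k : divisible_antisym 'X_k.
  rewrite /divisible_antisym -psubE psubX.
  case: (tpermP i j k) => [->|->|_ _].
  - by exists 1; rewrite mulr1.
  - by exists (-1); rewrite mulrN1 opprB.
  - by exists 0; rewrite mulr0 subrr.
have divXm m : divisible_antisym 'X_[m].
  rewrite mpolyXE_id; apply: (big_ind divisible_antisym) => // k _.
  by elim: (m k) => [|n IH]; rewrite ?expr0 // exprS; apply: divM.
elim/mpolyind: q => [|c m p _ _ divp]; last by apply: divD => //; apply: divZ.
by exists 0; rewrite mulr0 msym0 subrr.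
Qed.

Lemma divdiffP q : ('X_i - 'X_j) * divdiff i j q = q - psub (tperm i j) q.
Proof.
have [r e] := divisible_antisymP q.
have ex : exists r, ('X_i - 'X_j) * r = q - psub (tperm i j) q by exists r; rewrite psubE.
exact: (epsilon_spec _ _ ex).
Qed.

Lemma divdiffXl q : i != j ->
  divdiff i j ('X_i * q) = 'X_i * divdiff i j q + psub (tperm i j) q.
Proof.
move=> nij; apply: (mulfI (subX_neq0 nij)).
rewrite divdiffP mulrDr mulrCA divdiffP !psubE msymM -psubE psubX tpermL.
ring.
Qed.

Lemma mderivXl q : mderiv i ('X_i * q) = q + 'X_i * mderiv i q.
Proof.
have dXi : mderiv i ('X_i : {mpoly C[N]}) = 1.
  rewrite mderivX mnm1E eqxx scale1r -mpolyX0; congr mpolyX.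
  by apply/mnmP => k; rewrite mnmBE !mnmE subnn.
by rewrite mderivM dXi mul1r.
Qed.

End DividedDifference.

Section UOperators.
Variables (C : numClosedFieldType) (N : nat) (t : seq nat).
Variables (rho : 'S_N -> RSYT N t -> RSYT N t -> C) (kappa : C).
Implicit Types (p : VP C N t) (A : RSYT N t -> RSYT N t -> C).

Lemma xmulD i p q : xmul i (p + q) = xmul i p + xmul i q.
Proof. by apply/ffunP => T; rewrite !ffunE mulrDr. Qed.

Lemma xmulZ i a p : xmul i (a *: p) = a *: xmul i p.
Proof. by apply/ffunP => T; rewrite !ffunE scalerAr. Qed.

Lemma xmul_sum i (I : Type) (r : seq I) (P : pred I) (F : I -> VP C N t) :
  xmul i (\sum_(k <- r | P k) F k) = \sum_(k <- r | P k) xmul i (F k).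
Proof.
elim/big_rec2: _ => [|k x y _ <-]; last exact: xmulD.
by apply/ffunP => T; rewrite !ffunE mulr0.
Qed.

Lemma mapplyD A p q : mapply A (p + q) = mapply A p + mapply A q.
Proof.
by apply/ffunP => T; rewrite !ffunE -big_split; apply: eq_bigr => T' _; rewrite ffunE scalerDr.
Qed.

Lemma mapply_xmul A i p : mapply A (xmul i p) = xmul i (mapply A p).
Proof.
apply/ffunP => T; rewrite !ffunE mulr_sumr; apply: eq_bigr => T' _.
by rewrite ffunE scalerAr.
Qed.

Lemma dunkl_xmul i p : dunkl rho kappa i (xmul i p) =
  xmul i (dunkl rho kappa i p) + p + kappa *: \sum_(j | j != i) Defs.act rho (tperm i j) p.
Proof.
have deriv_part : [ffun T => mderiv i (xmul i p T)] = p + xmul i [ffun T => mderiv i (p T)].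
  by apply/ffunP => T; rewrite !ffunE mderivXl.
have divdiff_part j : j != i -> mapply (rho (tperm i j)) [ffun T => divdiff i j (xmul i p T)] =
    xmul i (mapply (rho (tperm i j)) [ffun T => divdiff i j (p T)]) + Defs.act rho (tperm i j) p.
  move=> ji; rewrite -mapply_xmul -mapplyD; congr mapply.
  by apply/ffunP => T; rewrite !ffunE divdiffXl // eq_sym.
rewrite /dunkl deriv_part (eq_bigr _ divdiff_part) big_split /=.
rewrite xmulD xmulZ xmul_sum scalerDr [p + _]addrC -!addrA.
by congr (_ + _); rewrite addrCA.
Qed.

Variable H : VP C N t -> VP C N t -> C.
Hypothesis hH : is_torus_form rho kappa H.
Hypothesis rho_mul : forall s u : 'S_N, rho (s * u)%g = matmul (rho u) (rho s).
Hypothesis kappa_real : kappa \is Num.real.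

Lemma UopE i p : Uop rho kappa i p =
  xmul i (dunkl rho kappa i p) + p +
  (kappa *: \sum_(j | j != i) Defs.act rho (tperm i j) p -
   kappa *: \sum_(j : 'I_N | (j < i)%N) Defs.act rho (tperm i j) p).
Proof. by rewrite /Uop dunkl_xmul addrA. Qed.

Let HDZl := hH.1.
Let H_conj := hH.2.1.

Lemma sum_transpositions_adjoint (P : pred 'I_N) i f g :
  H (\sum_(j | P j) Defs.act rho (tperm i j) f) g =
  H f (\sum_(j | P j) Defs.act rho (tperm i j) g).
Proof.
rewrite (form_suml HDZl) (form_sumr HDZl H_conj); apply: eq_bigr => j _.
by apply: (act_involution_adjoint rho_mul hH); rewrite tperm2.
Qed.

Lemma Uop_adjoint i f g : H (Uop rho kappa i f) g = H f (Uop rho kappa i g).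
Proof.
have [_ [_ [_ [_ [xD_adjoint _]]]]] := hH.
rewrite !UopE !(formDl HDZl) !(formDr HDZl H_conj) !(formNl HDZl) !(formNr HDZl H_conj).
rewrite !(formZl HDZl) !(formZr HDZl H_conj) conj_Creal //.
by rewrite xD_adjoint !sum_transpositions_adjoint.
Qed.

End UOperators.

Section FreeCase.
Variables (C : numClosedFieldType) (N : nat) (t : seq nat).
Variable rho : 'S_N -> RSYT N t -> RSYT N t -> C.

Lemma Uop_kappa0 i (p : VP C N t) : Uop rho 0 i p = [ffun T => mderiv i ('X_i * p T)].
Proof.
by apply/ffunP => T; rewrite /Uop /dunkl !scale0r subr0 addr0 !ffunE.
Qed.

Lemma mcoeff_mderivXl i (q : {mpoly C[N]}) b :
  (mderiv i ('X_i * q))@_b = (b i).+1%:R * q@_b.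
Proof. by rewrite mcoeff_mderiv mulrC addmC mcoeffMX mulr_natl. Qed.

(* For kappa = 0, U_i = d_i x_i multiplies x^b by b_i + 1, so only the monomial x^a survives. *)
Lemma Uop_kappa0_eigen_mono a (z : VP C N t) (v : RSYT N t -> C) :
  (forall T, (z T)@_a = v T) ->
  (forall i, Uop rho 0 i z = ((a i)%:R + 1) *: z) -> z = mono a v.
Proof.
move=> za zeig; apply/ffunP => T; rewrite ffunE; apply/mpolyP => b.
rewrite mcoeffZ mcoeffX; have [<-|nab] := eqVneq a b; first by rewrite mulr1 za.
rewrite mulr0; apply/eqP; apply: contraR nab => zb_neq0.
apply/eqP/mnmP => i; have := congr1 (fun p : VP C N t => (p T)@_b) (zeig i).
rewrite /= Uop_kappa0 !ffunE mcoeff_mderivXl mcoeffZ => /eqP.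
rewrite -subr_eq0 -mulrBl mulf_eq0 (negbTE zb_neq0) orbF subr_eq0.
by rewrite natr1 eqr_nat eqSS => /eqP ->.
Qed.

Lemma xmul_mono i a (v : RSYT N t -> C) : xmul i (mono a v) = mono (a + U_(i))%MM v.
Proof. by apply/ffunP => T; rewrite !ffunE mpolyXD -scalerAr mulrC. Qed.

Lemma act_mono0_basis w (T : RSYT N t) :
  Defs.act rho w (mono 0%MM (basisv C T)) = mono 0%MM (fun T' => rho w T' T).
Proof.
apply/ffunP => T'; rewrite actE ffunE (bigD1 T) //= big1 ?addr0 => [|T'' nT].
  by rewrite ffunE /basisv eqxx scale1r mpolyX0 msym1.
by rewrite ffunE /basisv (negbTE nT) scale0r msym0 scaler0.
Qed.

Variable H : VP C N t -> VP C N t -> C.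
Hypothesis hH : is_torus_form rho 0 H.

Lemma torus_form_mono a (v w : RSYT N t -> C) :
  H (mono a v) (mono a w) = H (mono 0%MM v) (mono 0%MM w).
Proof.
have [_ [_ [_ [_ [_ H_xmul]]]]] := hH.
elim: {a}(mdeg a) {-2}a (erefl (mdeg a)) => [|n IH] a deg_a.
  by move/eqP: deg_a; rewrite mdeg_eq0 => /eqP ->.
have [i ai_gt0] : exists i, (0 < a i)%N.
  apply/existsP; apply: contraT => /existsPn a_eq0.
  suff : mdeg a = 0%N by rewrite deg_a.
  by apply/eqP; rewrite mdeg_eq0; apply/eqP/mnmP => i; move: (a_eq0 i); rewrite lt0n negbK mnmE => /eqP.
have a_split : a = ((a - U_(i)) + U_(i))%MM.
  by rewrite submK //; apply/mnm_lepP => k; rewrite mnm1E; case: eqP => // <-.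
rewrite a_split -!xmul_mono H_xmul; apply: IH.
by move: deg_a; rewrite {1}a_split mdegD mdeg1 addn1 => -[].
Qed.

Lemma free_nsJack_orthogonal zeta (hz : is_nsJack rho 0 zeta) a T1 T2 :
  T1 != T2 -> H (zeta a T1) (zeta a T2) = 0.
Proof.
move=> T12.
have zeta_mono T : zeta a T = mono a (fun T' => rho ((rperm a)^-1)%g T' T).
  have [lead _ eig] := hz a T; apply: Uop_kappa0_eigen_mono => [T'|i]; first exact: lead.
  by rewrite eig mul0r addr0.
have [_ [_ [H_ip0 [H_inv _]]]] := hH.
by rewrite !zeta_mono torus_form_mono -!act_mono0_basis H_inv H_ip0 /ip0 (negbTE T12).
Qed.

End FreeCase.

Lemma card_ord_lt n k : (k <= n)%N -> #|[pred i : 'I_n | (i < k)%N]| = k.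
Proof.
move=> kn; have widen_inj : injective (widen_ord kn) by move=> i j [] /val_inj.
rewrite -[RHS](card_ord k) -(card_image widen_inj).
apply: eq_card => i; rewrite inE; apply/idP/imageP => [ik | [j _ ->] /=].
  by exists (Ordinal ik) => //; apply: val_inj.
exact: ltn_ord.
Qed.

Section YoungTableaux.
Variables (N : nat) (t : seq nat).
Hypothesis ht : is_partition_of N t.
Implicit Types A B T : RSYT N t.

Lemma in_diagramE (rc : 'I_N * 'I_N) : in_diagram t rc = (rc.2 < nth 0 t rc.1)%N.
Proof. by rewrite /in_diagram; case: ltnP => //= h; rewrite nth_default. Qed.

Lemma shape_nonincreasing r r' : (r <= r')%N -> (nth 0 t r' <= nth 0 t r)%N.
Proof.
move=> rr'; case: (ltnP r' (size t)) => [r't | ?]; last by rewrite nth_default.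
case/and3P: ht => sorted_t _ _.
have geq_trans : transitive geq by move=> y x z h1 h2; apply: leq_trans h2 h1.
apply: (sorted_leq_nth geq_trans leqnn 0 sorted_t) => //.
by rewrite unfold_in /= (leq_ltn_trans rr').
Qed.

(* Reading the cells of the diagram row by row embeds them into [0, sumn t). *)
Lemma card_diagram_le : (#|[pred rc : 'I_N * 'I_N | in_diagram t rc]| <= N)%N.
Proof.
case/and3P: ht => _ _ /eqP sum_t.
pose f (rc : 'I_N * 'I_N) := flatten_index t rc.1 rc.2.
rewrite cardE -(size_map f) -[X in (_ <= X)%N]sum_t -(size_iota 0 (sumn t)).
apply: uniq_leq_size.
  rewrite map_inj_in_uniq ?enum_uniq // => -[r c] [r' c'].
  rewrite !mem_enum !inE !in_diagramE /f /= => rc rc' e.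
  have er : r = r' by apply: val_inj => /=; rewrite -(flatten_indexKl rc) e flatten_indexKl.
  by subst r'; congr pair; apply: val_inj => /=; rewrite -(flatten_indexKr rc) e flatten_indexKr.
move=> n /mapP [[r c]]; rewrite mem_enum inE in_diagramE /= => rc ->.
by rewrite mem_iota /= flatten_indexP.
Qed.

Lemma rsyt_inj T : injective (val T).
Proof. by case/and3P: (valP T) => /injectiveP. Qed.

Lemma rsyt_in_diagram T k : in_diagram t (val T k).
Proof. by case/and3P: (valP T) => _ /forallP. Qed.

Lemma rsyt_row_decr T a b :
  (val T a).1 = (val T b).1 -> ((val T a).2 < (val T b).2)%N -> (b < a)%N.
Proof.
move=> e l; case/and3P: (valP T) => _ _ /forallP /(_ a) /forallP /(_ b) /andP [+ _].
by rewrite e eqxx l.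
Qed.

Lemma rsyt_col_decr T a b :
  (val T a).2 = (val T b).2 -> ((val T a).1 < (val T b).1)%N -> (b < a)%N.
Proof.
move=> e l; case/and3P: (valP T) => _ _ /forallP /(_ a) /forallP /(_ b) /andP [_].
by rewrite e eqxx l.
Qed.

Lemma rsyt_surj T rc : in_diagram t rc -> exists k, val T k = rc.
Proof.
move=> rc_in; set D := [pred rc : 'I_N * 'I_N | in_diagram t rc].
have sub : [set val T k | k in 'I_N] \subset D.
  by apply/subsetP => _ /imsetP [k _ ->]; rewrite inE rsyt_in_diagram.
have card_eq : #|[set val T k | k in 'I_N]| = #|D|.
  apply/eqP; rewrite eqn_leq subset_leq_card //.
  by rewrite card_imset ?card_ord ?card_diagram_le //; apply: rsyt_inj.
have /imsetP [k _ ->] : rc \in [set val T k | k in 'I_N].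
  by rewrite ((subset_cardP card_eq) sub) inE.
by exists k.
Qed.

(* If A and B agree on the entries above k and give k the same content, then k sits in the same row:
   otherwise the cell in A's row and B's column would hold, in B, an entry above k, which A places
   left of k in the same row. *)
Lemma rsyt_same_content_row A B (k : 'I_N) :
  (forall j : 'I_N, (k < j)%N -> val A j = val B j) -> content A k = content B k ->
  ~ ((val A k).1 < (val B k).1)%N.
Proof.
move=> agree same_content rowA_lt.
have /andP [_ colB] := rsyt_in_diagram B k.
have corner_in : in_diagram t ((val A k).1, (val B k).2).
  by rewrite in_diagramE; apply: leq_trans colB (shape_nonincreasing (ltnW rowA_lt)).
have [j Bj] := rsyt_surj B corner_in.
have kj : (k < j)%N by apply: (@rsyt_col_decr B); rewrite Bj.
have Aj := agree j kj; rewrite Bj in Aj.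
have : (j < k)%N.
  apply: (@rsyt_row_decr A); rewrite Aj //=.
  by move: same_content rowA_lt; rewrite /content /cm /rw /=; lia.
by rewrite ltnNge (ltnW kj).
Qed.

Lemma content_inj A B : (forall k, content A k = content B k) -> A = B.
Proof.
move=> same_content; apply: val_inj; apply/ffunP => k.
elim: {k}(N - k)%N {-2}k (leqnn (N - k)) => [|d IH] k hk.
  by have := ltn_ord k; lia.
have agree (j : 'I_N) : (k < j)%N -> val A j = val B j.
  by move=> kj; apply: IH; have := ltn_ord j; lia.
case: (ltngtP (val A k).1 (val B k).1) => [lt|lt|eq_row].
- by case: (rsyt_same_content_row agree (same_content k) lt).
- by case: (@rsyt_same_content_row B A k (fun j kj => esym (agree j kj)) (esym (same_content k)) lt).
- move: (same_content k); rewrite /content /cm /rw.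
  move: eq_row; case: (val A k) => a b; case: (val B k) => a' b' /= eq_row e.
  by congr pair; apply: val_inj => /=; lia.
Qed.

Lemma content_sub_lt_hook A B k l : (content A k - content B l < (hook_tau t)%:Z)%R.
Proof.
have /andP [rowA colA] := rsyt_in_diagram A k.
have /andP [rowB _] := rsyt_in_diagram B l.
have := shape_nonincreasing (leq0n (val A k).1); rewrite nth0.
by rewrite /hook_tau /content /cm /rw; move: colA rowB; lia.
Qed.

End YoungTableaux.

Lemma card_gt_add_card_eq (T : finType) (f : T -> nat) v :
  (#|[pred x | (v < f x)%N]| + #|[pred x | f x == v]| = #|[pred x | (v <= f x)%N]|)%N.
Proof.
rewrite -cardUI.
have -> : #|[predI [pred x | (v < f x)%N] & [pred x | f x == v]]| = 0%N.
  by apply: eq_card0 => x; rewrite !inE; apply/negP => /andP [+ /eqP fx]; rewrite fx ltnn.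
by rewrite addn0; apply: eq_card => x; rewrite !inE [RHS]leq_eqVlt orbC eq_sym.
Qed.

Section Partitions.
Variables (N : nat) (a : 'X_{1..N}).
Hypothesis a_part : is_partition_mnm a.

Lemma mplus_partition : mplus a = a.
Proof.
have geq_trans : transitive geq by move=> y x z h1 h2; apply: leq_trans h2 h1.
have sorted_a : sorted geq (a : seq nat).
  apply/(sortedP 0) => i; rewrite size_tuple => iN.
  by have := @a_part (Ordinal (ltnW iN)) (Ordinal iN); rewrite !(mnm_nth 0); apply.
by apply/mnmP => i; rewrite mnmE (sorted_sort geq_trans sorted_a) -mnm_nth.
Qed.

Lemma partition_lt_card_gt (k : 'I_N) v : (v < a k)%N -> (k < #|[pred m | (v < a m)%N]|)%N.
Proof.
move=> v_lt; rewrite -{1}(card_ord_lt (ltn_ord k)); apply: subset_leq_card.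
by apply/subsetP => m; rewrite !inE ltnS => mk; apply: leq_trans v_lt (a_part mk).
Qed.

Lemma partition_card_ge_le (k : 'I_N) v : (a k < v)%N -> (#|[pred m | (v <= a m)%N]| <= k)%N.
Proof.
move=> lt_v; rewrite -(card_ord_lt (ltnW (ltn_ord k))); apply: subset_leq_card.
apply/subsetP => m; rewrite !inE; apply: contraLR; rewrite -leqNgt -ltnNge => km.
exact: leq_ltn_trans (a_part km) lt_v.
Qed.

End Partitions.

Section Fillings.
Variables (N : nat) (t : seq nat).
Hypothesis ht : is_partition_of N t.

Lemma filling_rsyt (a : 'X_{1..N}) (T : RSYT N t) m : filling a T (val T m) = mplus a m.
Proof.
rewrite ffunE; case: pickP => [k /eqP /rsyt_inj -> // | no_k].
by move: (no_k m); rewrite eqxx.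
Qed.

Lemma filling_out (a : 'X_{1..N}) (T : RSYT N t) rc :
  ~~ in_diagram t rc -> filling a T rc = 0%N.
Proof.
move=> rc_out; rewrite ffunE; case: pickP => [k /eqP Tk | //].
by move: rc_out; rewrite -Tk rsyt_in_diagram.
Qed.

Lemma card_filling (a : 'X_{1..N}) (T : RSYT N t) (P : pred nat) :
  #|[pred kl : 'I_N * 'I_N | in_diagram t kl && P (filling a T kl)]| =
  #|[pred m : 'I_N | P (mplus a m)]|.
Proof.
rewrite -(card_imset _ (@rsyt_inj _ _ T)); apply: eq_card => kl; rewrite !inE.
apply/andP/imsetP => [[kl_in P_kl] | [m Pm ->]].
  by have [m Tm] := rsyt_surj ht T kl_in; exists m; rewrite // inE -(filling_rsyt a T m) Tm.
by rewrite rsyt_in_diagram filling_rsyt; rewrite inE in Pm.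
Qed.

(* If TS holds k in a cell of value v, the sink condition puts k among the positions m with lam m = v,
   which for a partition lam form the block right after those with lam m > v. *)
Lemma sink_filling (lam : 'X_{1..N}) (T TS : RSYT N t) :
  is_partition_mnm lam -> is_sink lam T TS -> filling lam TS = filling lam T.
Proof.
move=> lam_part sink; apply/ffunP => ij.
case: (boolP (in_diagram t ij)) => ij_in; last by rewrite !filling_out.
have [k TSk] := rsyt_surj ht TS ij_in; have [m Tm] := rsyt_surj ht T ij_in.
have F_ij : filling lam T ij = lam m by rewrite -Tm filling_rsyt mplus_partition.
rewrite -[in LHS]TSk filling_rsyt mplus_partition // F_ij.
have := sink k; rewrite /= TSk F_ij (card_filling lam T (fun x => lam m < x)%N).
set B := #|[pred kl : 'I_N * 'I_N | in_diagram t kl && _]|.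
have B_pos : (0 < B)%N.
  rewrite lt0n; apply/eqP => /card0_eq /(_ ij).
  by rewrite !inE ij_in F_ij eqxx ltnn eqxx leqnn orbT.
have B_le : (B <= #|[pred m' : 'I_N | mplus lam m' == lam m]|)%N.
  rewrite -(card_filling lam T (fun x => x == lam m)).
  by apply: subset_leq_card; apply/subsetP => kl; rewrite !inE => /and3P [-> -> _].
rewrite !mplus_partition // in B_le * => k_eq.
have /= := card_gt_add_card_eq lam (lam m).
case: (ltngtP (lam m) (lam k)) => [lt | lt | //].
- by have := partition_lt_card_gt lam_part lt; lia.
- by have := partition_card_ge_le lam_part lt; lia.
Qed.

End Fillings.

Lemma norm_mul_intr_lt1 (R : numFieldType) (k : R) (h : nat) (d : int) :
  k \is Num.real -> - h%:R^-1 < k < h%:R^-1 -> `|d| < h%:Z -> `|k * d%:~R| < 1.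
Proof.
move=> k_real k_range d_lt.
have h_gt0 : (0 : R) < h%:R by rewrite ltr0n; move: d_lt; have := normr_ge0 d; lia.
have k_lt : `|k| < h%:R^-1 by rewrite real_ltr_norml.
have d_le : `|d|%:~R <= h%:R :> R by rewrite -[h%:R]/((h%:Z)%:~R) ler_int ltW.
rewrite normrM -intr_norm; apply: (le_lt_trans (y := `|k| * h%:R)).
  exact: ler_wpM2l.
by rewrite -[X in _ < X](mulVf (lt0r_neq0 h_gt0)) ltr_pM2r.
Qed.

Section Spectrum.
Variables (C : numClosedFieldType) (N : nat) (t : seq nat).
Hypothesis ht : admissible_shape N t.
Variable kappa : C.
Hypothesis kappa_real : kappa \is Num.real.
Hypothesis kappa_range : - ((hook_tau t)%:R)^-1 < kappa < ((hook_tau t)%:R)^-1.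

Let t_part : is_partition_of N t. Proof. by case/and3P: ht. Qed.

Definition spectral_vector (a : 'X_{1..N}) (T : RSYT N t) (i : 'I_N) : C :=
  (a i)%:R + 1 + kappa * (content T (rperm a i))%:~R.

(* a_i - a'_i is an integer equal to kappa times a difference of contents, hence of modulus < 1. *)
Lemma spectral_vector_mnm_inj a1 a2 T1 T2 :
  spectral_vector a1 T1 =1 spectral_vector a2 T2 -> a1 = a2.
Proof.
move=> same_spec; apply/mnmP => i.
set c1 := content T1 (rperm a1 i); set c2 := content T2 (rperm a2 i).
have diff_eq : ((a1 i)%:Z - (a2 i)%:Z)%:~R = kappa * (c2 - c1)%:~R :> C.
  apply/eqP; rewrite -subr_eq0 -(subrr (spectral_vector a2 T2 i)) -{1}same_spec.
  by rewrite /spectral_vector !intrB; apply/eqP; ring.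
have : `|kappa * (c2 - c1)%:~R| < 1.
  apply: (norm_mul_intr_lt1 (h := hook_tau t)) => //.
  have := content_sub_lt_hook t_part T1 T2 (rperm a1 i) (rperm a2 i).
  have := content_sub_lt_hook t_part T2 T1 (rperm a2 i) (rperm a1 i).
  by rewrite ltr_norml; lia.
rewrite -diff_eq -intr_norm -[1]/((1%:Z)%:~R) ltr_int; lia.
Qed.

Lemma spectral_vector_rsyt_inj a T1 T2 : kappa != 0 ->
  spectral_vector a T1 =1 spectral_vector a T2 -> T1 = T2.
Proof.
move=> kappa_neq0 same_spec; apply: (content_inj t_part) => k.
have := same_spec ((rperm a)^-1 k)%g; rewrite /spectral_vector permKV.
by move=> /addrI /(mulfI kappa_neq0) /eqP; rewrite eqr_int => /eqP.
Qed.

Variables (rho : 'S_N -> RSYT N t -> RSYT N t -> C) (zeta : 'X_{1..N} -> RSYT N t -> VP C N t).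
Hypothesis hrho : is_young_rep rho.
Hypothesis hzeta : is_nsJack rho kappa zeta.
Variable H : VP C N t -> VP C N t -> C.
Hypothesis hH : is_torus_form rho kappa H.

Lemma nsJack_orthogonal a1 a2 T1 T2 :
  (a1, T1) != (a2, T2) -> H (zeta a1 T1) (zeta a2 T2) = 0.
Proof.
move=> pairs_neq.
have eigen a T i : Uop rho kappa i (zeta a T) = spectral_vector a T i *: zeta a T.
  by have [_ _] := hzeta a T; apply.
have [/existsP [i spec_neq] | /existsPn same_spec] :=
  boolP [exists i, spectral_vector a1 T1 i != spectral_vector a2 T2 i].
  apply: (eigenvectors_orthogonal hH.1 hH.2.1 (Uop_adjoint hH hrho.1 kappa_real i) _
           (eigen a1 T1 i) (eigen a2 T2 i) spec_neq).
  by rewrite rpredD ?rpredM ?realz // rpredD ?realn ?rpred1.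
have {}same_spec : spectral_vector a1 T1 =1 spectral_vector a2 T2.
  by move=> i; apply/eqP; move: (same_spec i); rewrite negbK.
have a12 := spectral_vector_mnm_inj same_spec; subst a2.
have T12 : T1 != T2 by move: pairs_neq; rewrite xpair_eqE eqxx.
have [kappa0 | kappa_neq0] := eqVneq kappa 0.
  by move: hH hzeta; rewrite kappa0 => hH0 hzeta0; apply: (free_nsJack_orthogonal hH0 hzeta0).
by rewrite (spectral_vector_rsyt_inj kappa_neq0 same_spec) eqxx in T12.
Qed.

End Spectrum.

Theorem mainTheorem11
  (C : numClosedFieldType) (N : nat) (t : seq nat)
  (ht : admissible_shape N t)
  (kappa : C) (kappa_real : kappa \is Num.real)
  (kappa_range : - ((hook_tau t)%:R)^-1 < kappa < ((hook_tau t)%:R)^-1)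
  (rho : 'S_N -> RSYT N t -> RSYT N t -> C) (hrho : is_young_rep rho)
  (zeta : 'X_{1..N} -> RSYT N t -> VP C N t) (hzeta : is_nsJack rho kappa zeta)
  (H : VP C N t -> VP C N t -> C) (hH : is_torus_form rho kappa H)
  (lam lam' : 'X_{1..N}) (T T' TS TS' : RSYT N t) :
  is_partition_mnm lam -> is_partition_mnm lam' ->
  column_strict t (filling lam T) -> column_strict t (filling lam' T') ->
  filling lam T != filling lam' T' ->
  is_sink lam T TS -> is_sink lam' T' TS' ->
  H (Jpoly kappa zeta lam TS) (Jpoly kappa zeta lam' TS') = 0.
Proof.
move=> lam_part lam'_part _ _ fillings_neq sink sink'.
have t_part : is_partition_of N t by case/and3P: ht.
have [HDZl H_conj] := (hH.1, hH.2.1).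
rewrite /Jpoly (form_suml HDZl); apply: big1 => b _; rewrite (form_suml HDZl).
apply: big1 => T1 fill1; rewrite (formZl HDZl) (form_sumr HDZl H_conj).
rewrite big1 ?mulr0 // => b' _; rewrite (form_sumr HDZl H_conj).
apply: big1 => T2 fill2; rewrite (formZr HDZl H_conj).
rewrite (nsJack_orthogonal ht kappa_real kappa_range hrho hzeta hH) ?mulr0 //.
apply: contra fillings_neq; rewrite xpair_eqE => /andP [/eqP b12 /eqP T12].
by rewrite -(sink_filling t_part lam_part sink) -(sink_filling t_part lam'_part sink')
  -(eqP fill1) -(eqP fill2) b12 T12.
Qed.
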